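(* Let $\Pi$ be a finite set of proposition symbols, $I=[a]$ with $a$ a positive integer, and $n\in\mathbb N$. Two finite pointed $(\Pi,I)$-models $(M,w)$ and $(N,v)$ satisfy exactly the same full graded multimodal $(\Pi,I)$-type of modal depth $n$ if and only if, for every counting multichannel message passing automaton $A$ for $(\Pi,I)$ and every round $t\le n$, the state of $A$ at $w$ in $M$ in round $t$ equals the state of $A$ at $v$ in $N$ in round $t$.
   Context: $(\Pi,I)$-formulae of graded multimodal logic are generated by $\varphi ::= \top \mid p \mid \neg\varphi \mid (\varphi\land\varphi) \mid \langle\alpha\rangle_{\geq k}\varphi$ ($p\in\Pi$, $\alpha\in I$, $k\in\mathbb N$); $\langle\alpha\rangle_{=k}\varphi$ abbreviates $\langle\alpha\rangle_{\geq k}\varphi\land\neg\langle\alpha\rangle_{\geq k+1}\varphi$. A $(\Pi,I)$-model is $M=(W,(R_\alpha)_{\alpha\in I},V)$ with $W$ nonempty finite, $R_\alpha\subseteq W\times W$, $V\colon\Pi\to\wp(W)$; pointed model $(M,w)$; $\mathcal N^\alpha(w)=\{u:(w,u)\in R_\alpha\}$. Semantics standard, $(M,w)\models\langle\alpha\rangle_{\geq k}\psi$ iff $|\{u\in\mathcal N^\alpha(w):(M,u)\models\psi\}|\geq k$. Full graded multimodal types: $\tau^{(M,w)}_\varepsilon$ is the canonically ordered conjunction of $p$ ($p\in\Pi$, $w\in V(p)$) and $\neg p$ ($p\in\Pi$, $w\notin V(p)$), $\top$ if $\Pi=\emptyset$. For widths $\mathbf k=(\mathbf k_1,\dots,\mathbf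 k_n)$, $\mathbf k_i\in\mathbb N^{|I|}$, $T_{\mathbf k}$ is the set of all types of width $\mathbf k$ of finite pointed models, and for $\mathbf k_0=(k_1,\dots,k_{|I|})$, $\tau^{(M,w)}_{(\mathbf k_0,\mathbf k)}$ is the canonical conjunction of $\tau^{(M,w)}_\varepsilon$, all $\langle\alpha\rangle_{=\ell}\tau$ ($1\le\ell\le k_\alpha-1$, $\tau\in T_{\mathbf k}$) true at $(M,w)$, all $\langle\alpha\rangle_{\geq k_\alpha}\tau$ ($\tau\in T_{\mathbf k}$) true at $(M,w)$, and all $\langle\alpha\rangle_{=|\mathcal N^\alpha(w)|}\top$ with $k_\alpha>|\mathcal N^\alpha(w)|$. The full type of depth $0$ is $\tau^{(M,w)}_0=\tau^{(M,w)}_\varepsilon$; the full type of depth $n+1$ is $\tau^{(M,w)}_{n+1}=\tau^{(M,w)}_{(\mathbf k_1,\dots,\mathbf k_{n+1})}$ for any widths with $k_{i,\alpha}>\max\{|\mathcal N^\alpha(u)|:(w,u)\in(\bigcup_\beta R_\beta)^{i-1}\}$ for all $i\in[n+1]$, $\alpha\in I$. A multiset over $X$ is a function $X\to\mathbb N$; $\mathfrak m(X)$ is the set of multisets over $X$. A counting multichannel message passing automaton for $(\Pi,I)$ is $A=(Q,\pi,\delta,F)$ with $Q$ a nonempty countable set, $\pi\colon\wp(\Pi)\to Q$, $\delta\colon\mathfrak m(Q)^{|I|}\times Q\to Q$, $F\subseteq Q$. Its states on a finite model $M$ are given by $f_0(w)=\pi(\{p\in\Pi:w\in V(p)\})$ and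 $f_{t+1}(w)=\delta(N_1,\dots,N_{|I|},f_t(w))$, where $N_\alpha$ is the multiset of values $f_t(u)$ for $u\in\mathcal N^\alpha(w)$; $f_t(w)$ is the state at $w$ in round $t$. *)

From HB Require Import structures.
From mathcomp Require Import all_boot.
From Stdlib Require Import ClassicalEpsilon.

Unset Strict Implicit.
Unset Printing Implicit Defensive.

Section Logic.
Variables (P : finType) (a : nat).

Inductive form : Type :=
  | Top : form
  | Var : P -> form
  | Neg : form -> form
  | And : form -> form -> form
  | Dia : 'I_a -> nat -> form -> form.

(* countable structure on formulas (used only to fix a canonical order) *)
Fixpoint enc (f : form) : GenTree.tree (P + ('I_a * nat)) :=
  match f with
  | Top => GenTree.Node 0 [::]
  | Var p => GenTree.Leaf (inl p)
  | Neg g => GenTree.Node 1 [:: enc g]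
  | And g h => GenTree.Node 2 [:: enc g; enc h]
  | Dia i k g => GenTree.Node 3 [:: GenTree.Leaf (inr (i, k)); enc g]
  end.

Fixpoint dec (t : GenTree.tree (P + ('I_a * nat))) : option form :=
  match t with
  | GenTree.Node 0 [::] => Some Top
  | GenTree.Leaf (inl p) => Some (Var p)
  | GenTree.Node 1 [:: g] => omap Neg (dec g)
  | GenTree.Node 2 [:: g; h] =>
      if dec g is Some g' then omap (And g') (dec h) else None
  | GenTree.Node 3 [:: GenTree.Leaf (inr (i, k)); g] => omap (Dia i k) (dec g)
  | _ => None
  end.

Lemma encK : pcancel enc dec.
Proof. by elim=> //= [g -> | g -> h -> | i k g ->]. Qed.

HB.instance Definition _ := Countable.copy form (pcan_type encK).

Definition Deq (i : 'I_a) (k : nat) (f : form) : form :=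
  And (Dia i k f) (Neg (Dia i k.+1 f)).

Definition bigAnd (s : seq form) : form :=
  match sort (fun x y => pickle x <= pickle y) (undup s) with
  | [::] => Top
  | x :: r => foldl And x r
  end.

(** Canonically ordered conjunction of a (finite) set of formulas given as a
    predicate; it depends only on the set. *)
Definition conj_set (S : form -> Prop) : form :=
  match excluded_middle_informative
          (exists s : seq form, forall f, S f <-> f \in s) with
  | left H => bigAnd (proj1_sig (constructive_indefinite_description _ H))
  | right _ => Top
  end.

(** Finite (Pi,I)-models: W finite (nonemptiness is provided by the point). *)
Record model : Type := Model {
  W : finType;
  R : 'I_a -> rel W;
  V : P -> {set W}
}.

Definition succs (M : model) (i : 'I_a) (w : W M) : {set W M} :=
  [set u | R M i w u].

Definition deg (M : model) (i : 'I_a) (w : W M) : nat := #|succs M i w|.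

Fixpoint sat (M : model) (f : form) : pred (W M) :=
  match f with
  | Top => predT
  | Var p => fun w => w \in V M p
  | Neg g => fun w => ~~ sat M g w
  | And g h => fun w => sat M g w && sat M h w
  | Dia i k g => fun w => k <= #|[set u in succs M i w | sat M g u]|
  end.

Definition tau_eps (M : model) (w : W M) : form :=
  bigAnd [seq (if w \in V M p then Var p else Neg (Var p)) | p <- enum P].

(** Conjuncts of the type of width (k0, ks), given the set Tk = T_ks. *)
Definition conjuncts (k0 : 'I_a -> nat) (Tk : form -> Prop)
    (M : model) (w : W M) (f : form) : Prop :=
  f = tau_eps M w
  \/ (exists (i : 'I_a) (l : nat) (t : form),
        [/\ Tk t, 0 < l < k0 i, f = Deq i l t & sat M (Deq i l t) w])
  \/ (exists (i : 'I_a) (t : form),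
        [/\ Tk t, f = Dia i (k0 i) t & sat M (Dia i (k0 i) t) w])
  \/ (exists i : 'I_a, deg M i w < k0 i /\ f = Deq i (deg M i w) Top).

Fixpoint typ (ks : seq ('I_a -> nat)) : forall M : model, W M -> form :=
  match ks with
  | [::] => tau_eps
  | k0 :: ks' => fun M w =>
      conj_set (conjuncts k0
                  (fun t => exists (M' : model) (w' : W M'), t = typ ks' M' w')
                  M w)
  end.

Fixpoint reach (M : model) (j : nat) (w u : W M) : bool :=
  if j is j'.+1 then [exists x, [exists i, R M i w x] && reach M j' x u]
  else u == w.

(** Widths ks (of length n) are admissible for the full type of (M,w):
    k_{i,alpha} > max{ |N^alpha(u)| : (w,u) in (U R)^(i-1) }  (max of the
    empty set taken to be 0). *)
Definition valid_widths (M : model) (w : W M) (ks : seq ('I_a -> nat)) :=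
  forall (j : nat) (i : 'I_a), j < size ks ->
    \max_(u | reach M j w u) deg M i u < nth (fun _ => 0) ks j i.

Definition same_full_type (n : nat) (M N : model) (w : W M) (v : W N) :=
  forall ks : seq ('I_a -> nat),
    size ks = n -> valid_widths M w ks -> valid_widths N v ks ->
    typ ks M w = typ ks N v.

(** Counting multichannel message passing automata; multisets over Q are
    functions Q -> nat. *)
Record automaton : Type := Automaton {
  Q : countType;
  pi : {set P} -> Q;
  delta : ('I_a -> (Q -> nat)) -> Q -> Q;
  F : pred Q
}.

Fixpoint state (A : automaton) (M : model) (t : nat) : W M -> Q A :=
  match t with
  | 0 => fun w => pi A [set p | w \in V M p]
  | t'.+1 => fun w =>
      delta A (fun i q => #|[set u in succs M i w | state A M t' u == q]|)
              (state A M t' w)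
  end.

End Logic.

Arguments Top {P a}.
Arguments W {P a} m.
Arguments R {P a} m i.
Arguments V {P a} m p.
Arguments Q {P a} _.
Arguments pi {P a} _.
Arguments delta {P a} _.
Arguments F {P a} _.
Arguments sat {P a} M f.
Arguments deg {P a} M i w.
Arguments succs {P a} M i w.
Arguments tau_eps {P a} M w.
Arguments typ {P a} ks M w.
Arguments reach {P a} M j w u.
Arguments valid_widths {P a} M w ks.
Arguments same_full_type {P a} n M N w v.
Arguments state {P a} A M t w.

(* If all automata agree on (M, w) and (N, v) up to round n, so does a universal
   automaton whose state records the label and, channel by channel, the multiset of the
   successors' previous states.  Such a state decides every graded formula of modal
   depth at most its round; the full type of depth n is assembled from the label, the
   out-degrees and the truth of such formulas, so the types coincide.
   Conversely, for widths larger than both models the full types exist and are equal,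
   so (N, v) satisfies the type of (M, w).  By induction on n, satisfying a type fixes
   the label, the out-degrees and, for each successor type, the exact number of
   successors of that type (all below the widths), hence the multisets of successor
   states that any automaton receives. *)

From Pilot Require Import Defs.
From mathcomp Require Import all_boot.
From Stdlib Require Import ClassicalEpsilon FunctionalExtensionality PropExtensionality.

Set Implicit Arguments.
Unset Strict Implicit.
Unset Printing Implicit Defensive.

Arguments Var {P a}. Arguments Neg {P a}. Arguments And {P a}. Arguments Dia {P a}.
Arguments Deq {P a}. Arguments bigAnd {P a}. Arguments conj_set {P a}.
Arguments conjuncts {P a}.

Definition asbool (X : Prop) : bool :=
  if excluded_middle_informative X then true else false.

Lemma asboolP (X : Prop) : reflect X (asbool X).
Proof. by rewrite /asbool; case: excluded_middle_informative => ?; constructor. Qed.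

Lemma card_set_count (T : finType) (S : {set T}) (p : pred T) :
  #|[set u in S | p u]| = count p (enum S).
Proof.
rewrite -size_filter -(card_uniqP _); last by rewrite filter_uniq ?enum_uniq.
by apply: eq_card => u; rewrite inE mem_filter mem_enum andbC.
Qed.

Lemma perm_size_count_in (T : eqType) (s1 s2 : seq T) :
  size s1 = size s2 -> {in s1, forall z, count_mem z s1 = count_mem z s2} ->
  perm_eq s1 s2.
Proof.
elim: s1 s2 => [|z s1 IHs] s2; first by case: s2.
move=> size_eq count_eq.
have z_s2 : z \in s2 by rewrite -has_pred1 has_count -count_eq ?mem_head //= eqxx.
have s2_rem := perm_to_rem z_s2.
apply: (@perm_trans _ (z :: rem z s2)); last by rewrite perm_sym.
rewrite perm_cons; apply: IHs.
  by rewrite size_rem // -size_eq.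
move=> y y_s1; have := count_eq y (mem_behead (s := z :: s1) y_s1).
by rewrite (permP s2_rem) /= => /eqP; rewrite eqn_add2l => /eqP.
Qed.

Lemma perm_map_enum (T1 T2 : finType) (D : eqType) (X : {set T1}) (Y : {set T2})
    (f : T1 -> D) (g : T2 -> D) :
  #|X| = #|Y| ->
  (forall u, u \in X -> #|[set u' in X | f u' == f u]| = #|[set y in Y | g y == f u]|) ->
  perm_eq [seq f u | u <- enum X] [seq g y | y <- enum Y].
Proof.
move=> card_eq count_eq; apply: perm_size_count_in; first by rewrite !size_map -!cardE.
move=> z /mapP[u]; rewrite mem_enum => u_X ->.
by rewrite !count_map -!card_set_count count_eq.
Qed.

Lemma mem_sort_undup (T : eqType) (r : rel T) (s : seq T) : sort r (undup s) =i s.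
Proof. by move=> x; rewrite mem_sort mem_undup. Qed.

Section GradedModalLogic.
Variables (P : finType) (a : nat).
Local Notation form := (form P a).
Local Notation model := (model P a).
Implicit Types (M N K : model) (f g : form) (s C L : seq form).

Fixpoint depth f : nat :=
  match f with
  | Top | Var _ => 0
  | Neg g => depth g
  | And g h => maxn (depth g) (depth h)
  | Dia _ _ g => (depth g).+1
  end.

Lemma eq_bigAnd s1 s2 : s1 =i s2 -> bigAnd s1 = bigAnd s2.
Proof.
move=> eq_s; rewrite /bigAnd; congr (match _ with [::] => _ | x :: r => _ end).
apply/perm_sortP.
- by move=> f g; apply: leq_total.
- by move=> f g h; apply: leq_trans.
- by move=> f g /anti_leq /(pcan_inj (@pickleK _)).
by apply: perm_undup.
Qed.

Lemma sat_bigAnd M (x : W M) s : sat M (bigAnd s) x = all (sat M ^~ x) s.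
Proof.
rewrite /bigAnd; have := mem_sort_undup (fun f g => pickle f <= pickle g) s.
case: sort => [|y r] /= mem_yr; rewrite -(eq_all_r mem_yr) //.
elim: r {mem_yr} y => [|z r IHr] y /=; first by rewrite andbT.
by rewrite IHr /= andbA.
Qed.

Lemma depth_bigAnd s d : {in s, forall f, depth f <= d} -> depth (bigAnd s) <= d.
Proof.
move=> le_d; rewrite /bigAnd; have := mem_sort_undup (fun f g => pickle f <= pickle g) s.
case: sort => [|y r] //= mem_yr.
have : all (fun f => depth f <= d) (y :: r) by apply/allP => f; rewrite mem_yr => /le_d.
elim: r {mem_yr} y => [|z r IHr] y /=; first by rewrite andbT.
by case/and3P=> dy dz dr; apply: IHr; rewrite /= geq_max dy dz.
Qed.

Lemma conj_setE (S : form -> Prop) s : (forall f, S f <-> f \in s) -> conj_set S = bigAnd s.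
Proof.
move=> S_s; rewrite /conj_set; case: excluded_middle_informative => [S_fin|]; last first.
  by case; exists s.
case: constructive_indefinite_description => s' S_s' /=.
by apply: eq_bigAnd => f; apply/idP/idP => [/S_s'/S_s | /S_s/S_s'].
Qed.

Lemma conj_set_filter (S : form -> Prop) C :
  (forall f, S f -> f \in C) -> conj_set S = bigAnd [seq f <- C | asbool (S f)].
Proof.
move=> S_C; apply: conj_setE => f; rewrite mem_filter.
by split=> [Sf | /andP[/asboolP]] //; rewrite S_C // andbT; apply/asboolP.
Qed.

Lemma sat_conj_set (S : form -> Prop) C M (x : W M) :
  (forall f, S f -> f \in C) -> sat M (conj_set S) x <-> (forall f, S f -> sat M f x).
Proof.
move=> S_C; rewrite (conj_set_filter S_C) sat_bigAnd; split.
  by move/allP=> sat_all f Sf; apply: sat_all; rewrite mem_filter S_C // andbT; apply/asboolP.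
by move=> sat_S; apply/allP=> f; rewrite mem_filter => /andP[/asboolP/sat_S].
Qed.

Lemma conj_set_mem (S : form -> Prop) C :
  (forall f, S f -> f \in C) ->
  conj_set S \in [seq bigAnd (mask m C) | m : (size C).-tuple bool].
Proof.
move=> S_C; rewrite (conj_set_filter S_C) filter_mask.
by apply/imageP; exists (map_tuple (fun f => asbool (S f)) (in_tuple C)).
Qed.

Lemma depth_conj_set (S : form -> Prop) d :
  (forall f, S f -> depth f <= d) -> depth (conj_set S) <= d.
Proof.
move=> le_d; rewrite /conj_set; case: excluded_middle_informative => // S_fin.
case: constructive_indefinite_description => s S_s /=.
by apply: depth_bigAnd => f /S_s /le_d.
Qed.

Definition label M (u : W M) : {set P} := [set p | u \in V M p].
Arguments label : clear implicits.

Lemma in_label M (u : W M) p : (p \in label M u) = (u \in V M p).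
Proof. by rewrite inE. Qed.

Definition literal (X : {set P}) (p : P) : form := if p \in X then Var p else Neg (Var p).

Definition tau_of (X : {set P}) : form := bigAnd [seq literal X p | p <- enum P].

Lemma tau_epsE M (u : W M) : tau_eps M u = tau_of (label M u).
Proof. by congr bigAnd; apply: eq_map => p; rewrite /literal inE. Qed.

Lemma sat_tau_of M (x : W M) X : sat M (tau_of X) x = (label M x == X).
Proof.
rewrite sat_bigAnd all_map; apply/allP/eqP => [sat_lit | <-]; last first.
  by move=> p _ /=; rewrite /literal in_label; case: ifP => //= /negbT.
apply/setP => p; rewrite in_label; have := sat_lit p (mem_enum _ p).
by rewrite /= /literal; case: (p \in X) => //= /negbTE.
Qed.

Lemma depth_tau_of X : depth (tau_of X) = 0.
Proof.
apply/eqP; rewrite -leqn0; apply: depth_bigAnd => _ /mapP[p _ ->].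
by rewrite /literal; case: ifP.
Qed.

Definition taus : seq form := [seq tau_of X | X : {set P}].

Lemma tau_eps_mem M (u : W M) : tau_eps M u \in taus.
Proof. by rewrite tau_epsE; apply/imageP; exists (label M u). Qed.

Definition nsucc M i (u : W M) f : nat := #|[set u' in succs M i u | sat M f u']|.
Arguments nsucc : clear implicits.

Lemma sat_Deq M i (u : W M) l f : sat M (Deq i l f) u = (nsucc M i u f == l).
Proof. by rewrite /Deq /= -leqNgt -eqn_leq eq_sym. Qed.

Lemma sat_Dia M i (u : W M) k f : sat M (Dia i k f) u = (k <= nsucc M i u f).
Proof. by []. Qed.

Lemma nsucc_eq_sat_Dia M N i (u : W M) (x : W N) f :
  (forall k, sat M (Dia i k f) u = sat N (Dia i k f) x) -> nsucc M i u f = nsucc N i x f.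
Proof.
move=> Dia_eq; have le_eq k : (k <= nsucc M i u f) = (k <= nsucc N i x f) by exact: Dia_eq.
by apply/eqP; rewrite eqn_leq -le_eq leqnn le_eq leqnn.
Qed.

Lemma nsucc_Top M i (u : W M) : nsucc M i u Top = deg M i u.
Proof. by apply: eq_card => u'; rewrite inE andbT. Qed.

Lemma nsucc_le_deg M i (u : W M) f : nsucc M i u f <= deg M i u.
Proof. by apply/subset_leq_card/subsetP => u'; rewrite inE => /andP[]. Qed.

Definition is_typ ks (t : form) : Prop := exists M (u : W M), t = typ ks M u.

Definition grades (n : nat) : seq ('I_a * nat) := [seq (i, l) | i <- enum 'I_a, l <- iota 0 n].

Lemma mem_grades n i l : l < n -> (i, l) \in grades n.
Proof. by move=> lt_l; apply: allpairs_f; rewrite ?mem_enum // mem_iota. Qed.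

Lemma conjuncts_finite k0 ks L : (forall M (u : W M), typ ks M u \in L) ->
  exists C, forall M (u : W M) f, conjuncts k0 (is_typ ks) M u f -> f \in C.
Proof.
move=> typ_L; pose n := (\max_i k0 i).+1.
have grade_n i l : l <= k0 i -> (i, l) \in grades n.
  by move=> le_l; apply: mem_grades; rewrite ltnS (leq_trans le_l) // leq_bigmax.
exists (taus ++ [seq Deq il.1 il.2 t | il <- grades n, t <- Top :: L]
             ++ [seq Dia il.1 il.2 t | il <- grades n, t <- L]).
move=> M u f; rewrite !mem_cat.
case=> [-> | [[i [l [t [[M' [u' ->]] /andP[_ lt_l] -> _]]]] |
             [[i [t [[M' [u' ->]] -> _]]] | [i [lt_deg ->]]]]].
- by rewrite tau_eps_mem.
- apply/orP; right; apply/orP; left.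
  apply: (allpairs_f (fun il t => Deq il.1 il.2 t) (grade_n i l (ltnW lt_l))).
  by rewrite inE typ_L orbT.
- apply/orP; right; apply/orP; right.
  exact: (allpairs_f (fun il t => Dia il.1 il.2 t) (grade_n i _ (leqnn _))).
- apply/orP; right; apply/orP; left.
  exact: (allpairs_f (fun il t => Deq il.1 il.2 t) (grade_n i _ (ltnW lt_deg)) (mem_head _ _)).
Qed.

(* [conj_set] is [Top] on infinite sets, so the meaning of a type rests on this finiteness. *)
Lemma typ_finite ks : exists L, forall M (u : W M), typ ks M u \in L.
Proof.
elim: ks => [|k0 ks [L typ_L]]; first by exists taus; apply: tau_eps_mem.
have [C conj_C] := conjuncts_finite k0 typ_L.
by exists [seq bigAnd (mask m C) | m : (size C).-tuple bool] => M u; apply/conj_set_mem/conj_C.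
Qed.

Lemma sat_typ_cons k0 ks M N (u : W M) (x : W N) :
  sat N (typ (k0 :: ks) M u) x <-> (forall f, conjuncts k0 (is_typ ks) M u f -> sat N f x).
Proof.
have [L typ_L] := typ_finite ks; have [C conj_C] := conjuncts_finite k0 typ_L.
exact: sat_conj_set (conj_C M u).
Qed.

Lemma sat_typ_self ks M (u : W M) : sat M (typ ks M u) u.
Proof.
have sat_tau : sat M (tau_eps M u) u by rewrite tau_epsE sat_tau_of.
case: ks => [|k0 ks] //; apply/sat_typ_cons => f.
by case=> [-> | [[i [l [t [_ _ -> ->]]]] | [[i [t [_ -> ->]]] | [i [_ ->]]]]];
  rewrite // sat_Deq nsucc_Top.
Qed.

Lemma depth_typ ks M (u : W M) : depth (typ ks M u) <= size ks.
Proof.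
elim: ks M u => [|k0 ks IHks] M u; first by rewrite /= tau_epsE depth_tau_of.
apply: depth_conj_set => f.
case=> [-> | [[i [l [t [[M' [u' ->]] _ -> _]]]] | [[i [t [[M' [u' ->]] -> _]]] | [i [_ ->]]]]].
- by rewrite tau_epsE depth_tau_of.
- by rewrite /Deq /= maxnn ltnS IHks.
- by rewrite /= ltnS IHks.
- by [].
Qed.

Lemma sat_typ_label ks M N (u : W M) (x : W N) :
  sat N (typ ks M u) x -> label N x = label M u.
Proof.
case: ks => [|k0 ks]; first by rewrite /= tau_epsE sat_tau_of => /eqP.
by move/sat_typ_cons/(_ _ (or_introl erefl)); rewrite tau_epsE sat_tau_of => /eqP.
Qed.

Lemma sat_typ_deg k0 ks M N (u : W M) (x : W N) i : deg M i u < k0 i ->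
  sat N (typ (k0 :: ks) M u) x -> deg N i x = deg M i u.
Proof.
move=> lt_deg /sat_typ_cons sat_x; apply/eqP; rewrite -nsucc_Top -sat_Deq.
by apply: sat_x; right; right; right; exists i.
Qed.

Lemma sat_typ_nsucc k0 ks M N (u : W M) (x : W N) i t :
  is_typ ks t -> 0 < nsucc M i u t < k0 i ->
  sat N (typ (k0 :: ks) M u) x -> nsucc N i x t = nsucc M i u t.
Proof.
move=> typ_t range /sat_typ_cons sat_x; apply/eqP; rewrite -sat_Deq.
by apply: sat_x; right; left; exists i, (nsucc M i u t), t; split; rewrite ?sat_Deq.
Qed.

Lemma valid_widths_deg k0 ks M (u : W M) i : valid_widths M u (k0 :: ks) -> deg M i u < k0 i.
Proof.
move/(_ 0 i (ltn0Sn _)); apply: leq_ltn_trans.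
exact: (leq_bigmax_cond (P := fun z => z == u)).
Qed.

Lemma valid_widths_succ k0 ks M (u : W M) i u' :
  valid_widths M u (k0 :: ks) -> u' \in succs M i u -> valid_widths M u' ks.
Proof.
move=> valid_u u'_succ j i' lt_j; apply: leq_ltn_trans (valid_u j.+1 i' lt_j).
apply/bigmax_leqP => z reach_z.
apply: (leq_bigmax_cond (P := fun z => reach M j.+1 u z)).
apply/existsP; exists u'; apply/andP; split; last exact: reach_z.
by apply/existsP; exists i; rewrite inE in u'_succ.
Qed.

Lemma valid_widths_nseq n k M (u : W M) : #|W M| < k -> valid_widths M u (nseq n (fun=> k)).
Proof.
move=> lt_k j i; rewrite size_nseq => lt_j; rewrite nth_nseq lt_j.
by apply: leq_ltn_trans lt_k; apply/bigmax_leqP => z _; apply: max_card.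
Qed.

Definition aut_equiv n M N (u : W M) (x : W N) : Prop :=
  forall (A : automaton P a) t, t <= n -> state A M t u = state A N t x.
Arguments aut_equiv : clear implicits.

Definition succ_states (A : automaton P a) M t i (u : W M) : seq (Q A) :=
  [seq state A M t u' | u' <- enum (succs M i u)].
Arguments succ_states : clear implicits.

Lemma state0 (A : automaton P a) M (u : W M) : state A M 0 u = Defs.pi A (label M u).
Proof. by []. Qed.

Lemma stateS (A : automaton P a) M t (u : W M) :
  state A M t.+1 u =
  Defs.delta A (fun i q => count_mem q (succ_states A M t i u)) (state A M t u).
Proof.
congr (Defs.delta A _ _); apply: functional_extensionality => i.
by apply: functional_extensionality => q; rewrite count_map card_set_count.
Qed.

Definition utree := GenTree.tree {set P}.

(* Unspecified when [m] has infinite support. *)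
Definition mset_seq (m : utree -> nat) : seq utree :=
  epsilon (inhabits [::]) (fun s : seq utree => forall q, count_mem q s = m q).

Lemma perm_mset_seq (s : seq utree) : perm_eq (mset_seq (fun q => count_mem q s)) s.
Proof.
have count_eq : forall q, count_mem q (mset_seq (fun q => count_mem q s)) = count_mem q s.
  apply: (epsilon_spec _ (fun s' : seq utree => forall q, count_mem q s' = count_mem q s)).
  by exists s.
by apply/allP => q _ /=; rewrite count_eq.
Qed.

Definition root_label (q : utree) : {set P} :=
  match q with
  | GenTree.Leaf X | GenTree.Node _ (GenTree.Leaf X :: _) => X
  | _ => set0
  end.

Definition universal : automaton P a :=
  @Automaton P a utree (@GenTree.Leaf _)
    (fun m q => GenTree.Node 0 (GenTree.Leaf (root_label q) ::
                                [seq GenTree.Node 0 (mset_seq (m i)) | i <- enum 'I_a]))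
    predT.

Lemma root_label_universal M t (u : W M) : root_label (state universal M t u) = label M u.
Proof. by elim: t. Qed.

Lemma perm_succ_states_universal M N t i (u : W M) (x : W N) :
  state universal M t.+1 u = state universal N t.+1 x ->
  perm_eq (succ_states universal M t i u) (succ_states universal N t i x).
Proof.
rewrite !stateS => -[_ /(eq_in_map _ _ _).2 /(_ i (mem_enum _ i)) [mset_eq]].
by rewrite -(permPl (perm_mset_seq _)) mset_eq perm_mset_seq.
Qed.

Lemma sat_universal f t M N (u : W M) (x : W N) : depth f <= t ->
  state universal M t u = state universal N t x -> sat M f u = sat N f x.
Proof.
elim: f t M N u x => [|p|g IHg|g IHg h IHh|i k g IHg] t M N u x /=.
- by [].
- move=> _ /(congr1 root_label); rewrite !root_label_universal => /setP/(_ p).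
  by rewrite !in_label.
- by move=> le_g state_eq; rewrite (IHg t _ _ _ _ le_g state_eq).
- rewrite geq_max => /andP[le_g le_h] state_eq.
  by rewrite (IHg t _ _ _ _ le_g state_eq) (IHh t _ _ _ _ le_h state_eq).
case: t => // t le_g state_eq.
(* By the induction hypothesis, [phi] reads off the truth of [g] from a round-[t] state. *)
pose phi q := asbool (exists K (y : W K), state universal K t y = q /\ sat K g y).
have phiE K (y : W K) : phi (state universal K t y) = sat K g y.
  apply/asboolP/idP => [[K' [y' [state_eq' sat_y']]] | sat_y]; last by exists K, y.
  by rewrite -(IHg t K' K y' y le_g state_eq').
have nsuccE K (y : W K) : nsucc K i y g = count phi (succ_states universal K t i y).
  by rewrite /nsucc count_map card_set_count; apply: eq_count => z; rewrite /= phiE.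
by rewrite -!/(nsucc _ _ _ _) !nsuccE (permP (perm_succ_states_universal i state_eq)).
Qed.

Lemma conjuncts_transfer k0 (T : form -> Prop) M N (u : W M) (x : W N) f :
  tau_eps M u = tau_eps N x -> (forall i, deg M i u = deg N i x) ->
  (forall i t, T t -> nsucc M i u t = nsucc N i x t) ->
  conjuncts k0 T M u f -> conjuncts k0 T N x f.
Proof.
move=> tau_eq deg_eq nsucc_eq.
case=> [-> | [[i [l [t [Tt range -> sat_u]]]] | [[i [t [Tt -> sat_u]]] | [i [lt_deg ->]]]]].
- by left.
- by right; left; exists i, l, t; rewrite sat_Deq -nsucc_eq -?sat_Deq.
- by right; right; left; exists i, t; rewrite sat_Dia -nsucc_eq -?sat_Dia.
- by right; right; right; exists i; rewrite -deg_eq.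
Qed.

Lemma typ_eq_universal ks M N (u : W M) (x : W N) :
  state universal M (size ks) u = state universal N (size ks) x -> typ ks M u = typ ks N x.
Proof.
move=> state_eq.
have tau_eq : tau_eps M u = tau_eps N x.
  by rewrite !tau_epsE -(root_label_universal (size ks) u) state_eq root_label_universal.
case: ks state_eq => [|k0 ks] state_eq //=.
have nsucc_eq i f : depth f <= size ks -> nsucc M i u f = nsucc N i x f.
  by move=> le_f; apply: nsucc_eq_sat_Dia => k; apply: sat_universal state_eq.
congr conj_set; apply: functional_extensionality => f.
apply: propositional_extensionality.
by split; apply: conjuncts_transfer => // [i | i t [M' [u' ->]]];
  rewrite -?nsucc_Top nsucc_eq ?depth_typ.
Qed.

Section SuccessorStates.
Variables (k0 : 'I_a -> nat) (ks : seq ('I_a -> nat)) (M N : model) (u : W M) (x : W N).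
Hypothesis valid_u : valid_widths M u (k0 :: ks).
Hypothesis sat_x : sat N (typ (k0 :: ks) M u) x.
Hypothesis IHks : forall K K' (y : W K) (y' : W K'),
  valid_widths K y ks -> sat K' (typ ks K y) y' -> aut_equiv (size ks) K K' y y'.

Lemma sat_typ_succ (A : automaton P a) t i u0 K (y : W K) :
  t <= size ks -> u0 \in succs M i u ->
  sat K (typ ks M u0) y = ((typ ks K y, state A K t y) == (typ ks M u0, state A M t u0)).
Proof.
move=> le_t u0_succ; apply/idP/eqP => [sat_y | [<- _]]; last exact: sat_typ_self.
have equiv := IHks (valid_widths_succ valid_u u0_succ) sat_y.
by rewrite (equiv A t le_t) (typ_eq_universal (equiv universal _ (leqnn _))).
Qed.

Lemma perm_succ_states (A : automaton P a) t i : t <= size ks ->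
  perm_eq (succ_states A M t i u) (succ_states A N t i x).
Proof.
(* The grade conjuncts make the successor lists of [u] and [x] agree as multisets of
   types, and by induction the type of a successor determines its state. *)
move=> le_t; pose f K (y : W K) := (typ ks K y, state A K t y).
have lt_deg := valid_widths_deg i valid_u.
suff: perm_eq (map (f M) (enum (succs M i u))) (map (f N) (enum (succs N i x))).
  by move/(perm_map snd); rewrite -!map_comp.
apply: perm_map_enum => [|u0 u0_succ]; first exact/esym/(sat_typ_deg lt_deg sat_x).
have nsuccE K (y : W K) :
    #|[set y' in succs K i y | f K y' == f M u0]| = nsucc K i y (typ ks M u0).
  by apply: eq_card => y'; rewrite !inE (@sat_typ_succ A t i u0 K y' le_t u0_succ).
rewrite !nsuccE; symmetry; apply: sat_typ_nsucc sat_x; first by exists M, u0.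
rewrite (leq_ltn_trans (nsucc_le_deg _ _ _) lt_deg) andbT.
by apply/card_gt0P; exists u0; rewrite inE u0_succ sat_typ_self.
Qed.

End SuccessorStates.

Lemma sat_typ_aut_equiv ks M N (u : W M) (x : W N) :
  valid_widths M u ks -> sat N (typ ks M u) x -> aut_equiv (size ks) M N u x.
Proof.
elim: ks M N u x => [|k0 ks IHks] M N u x valid_u sat_x A t.
  by rewrite leqn0 => /eqP ->; rewrite !state0 (sat_typ_label sat_x).
elim: t => [_ | t IHt le_t]; first by rewrite !state0 (sat_typ_label sat_x).
rewrite !stateS IHt 1?ltnW //; congr (Defs.delta A _ _).
apply: functional_extensionality => i; apply: functional_extensionality => q.
by have /permP-> := perm_succ_states valid_u sat_x IHks A i le_t.
Qed.

End GradedModalLogic.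

Theorem lemma2 (P : finType) (a : nat) (a_pos : 0 < a) (n : nat)
    (M N : model P a) (w : W M) (v : W N) :
  same_full_type n M N w v <->
  (forall (A : automaton P a) (t : nat), t <= n ->
     state A M t w = state A N t v).
Proof.
split=> [same_typ | equiv ks size_ks _ _]; last first.
  by apply: typ_eq_universal; apply: equiv; rewrite size_ks.
pose ks := nseq n (fun=> (#|W M| + #|W N|).+1) : seq ('I_a -> nat).
have valid_M : valid_widths M w ks by apply: valid_widths_nseq; rewrite ltnS leq_addr.
have valid_N : valid_widths N v ks by apply: valid_widths_nseq; rewrite ltnS leq_addl.
have sat_v : sat N (typ ks M w) v.
  by rewrite (same_typ ks (size_nseq _ _) valid_M valid_N) sat_typ_self.
by have := sat_typ_aut_equiv valid_M sat_v; rewrite size_nseq.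
Qed.
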